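(* Let $L$ be a C-lattice. The following are equivalent: (i) $L$ is sharp; (ii) $a=(a:(a:b))(a:b)$ for all $a,b\in L$; (iii) $(a:b)$ divides $a$ for all $a,b\in L$; (iv) $(a:b)$ divides $a$ whenever $a,b\in L$ satisfy $0<a<b<1$ and $a$ is not a prime element.
   Context: A multiplicative lattice is a complete lattice $(L,\le)$ with bottom $0$ and top $1$ which is also a commutative monoid with identity $1$ such that $a(\bigvee_\alpha b_\alpha)=\bigvee_\alpha(ab_\alpha)$ for all $a,b_\alpha\in L$. For $x,y\in L$, $(y:x)=\bigvee\{a\in L: ax\le y\}$. An element $c$ is compact if $c\le\bigvee S$ implies $c\le\bigvee T$ for some finite $T\subseteq S$. A C-lattice is a multiplicative lattice in which $1$ is compact, the product of two compact elements is compact, and every element is a join of compact elements. A proper element $p\neq 1$ is prime if $xy\le p$ implies $x\le p$ or $y\le p$. We say $a$ divides $b$ if $b=ac$ for some $c\in L$. $L$ is sharp if whenever $a_1a_2\le b$ with $a_1,a_2,b\in L$, there exist $b_1,b_2\in L$ with $a_i\le b_i$ ($i=1,2$) and $b=b_1b_2$. *)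

From Stdlib Require Import List.

Record mult_lattice := MultLattice {
  carrier :> Type;
  le : carrier -> carrier -> Prop;
  sup : (carrier -> Prop) -> carrier;
  mul : carrier -> carrier -> carrier;
  top : carrier;
  bot : carrier;
  le_refl : forall x, le x x;
  le_trans : forall x y z, le x y -> le y z -> le x z;
  le_antisym : forall x y, le x y -> le y x -> x = y;
  sup_ub : forall (S : carrier -> Prop) x, S x -> le x (sup S);
  sup_least : forall (S : carrier -> Prop) y,
      (forall x, S x -> le x y) -> le (sup S) y;
  bot_least : forall x, le bot x;
  top_greatest : forall x, le x top;
  mul_assoc : forall x y z, mul x (mul y z) = mul (mul x y) z;
  mul_comm : forall x y, mul x y = mul y x;
  mul_top_l : forall x, mul top x = x;
  mul_sup_distr : forall a (S : carrier -> Prop),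
      mul a (sup S) = sup (fun y => exists b, S b /\ y = mul a b)
}.

Arguments le {m} _ _.
Arguments sup {m} _.
Arguments mul {m} _ _.
Arguments top {m}.
Arguments bot {m}.

Section Defs.
Variable L : mult_lattice.

Definition lt (x y : L) : Prop := le x y /\ x <> y.

Definition colon (y x : L) : L := sup (fun a : L => le (mul a x) y).

Definition compact (c : L) : Prop :=
  forall S : L -> Prop, le c (sup S) ->
    exists T : list L, (forall t, In t T -> S t) /\ le c (sup (fun t => In t T)).

Definition C_lattice : Prop :=
  compact (@top L) /\
  (forall a b : L, compact a -> compact b -> compact (mul a b)) /\
  (forall x : L, x = sup (fun c => compact c /\ le c x)).

Definition prime_elt (p : L) : Prop :=
  p <> @top L /\ forall x y : L, le (mul x y) p -> le x p \/ le y p.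

Definition divides (a b : L) : Prop := exists c : L, b = mul a c.

Definition sharp : Prop :=
  forall a1 a2 b : L, le (mul a1 a2) b ->
    exists b1 b2 : L, le a1 b1 /\ le a2 b2 /\ b = mul b1 b2.

End Defs.

(** If [c] divides [a], then [a = c (a:c)], so (ii) and (iii) say the same
    thing.  Sharpness applied to [(a:b) b <= a] gives [a = b1 b2] with
    [(a:b) <= b1] and [b <= b2], which forces [b1 = (a:b)].  Conversely, if
    residuals always divide, then [a1 a2 <= b] is witnessed by [b1 = (b:a2)]
    and [b2 = (b:b1)].  For (iv), replacing [b] by [a \/ b] does not change
    [(a:b)], and in the excluded cases ([b <= a], [b = 1], [a = 0], [a] prime)
    the residual is [1] or [a]. *)

From Stdlib Require Import Classical.

Section MultLattice.
Variable L : mult_lattice.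
Implicit Types a b c x y z : L.

Definition join x y : L := sup (fun t => t = x \/ t = y).

Lemma le_join_l x y : le x (join x y).
Proof. apply sup_ub. now left. Qed.

Lemma le_join_r x y : le y (join x y).
Proof. apply sup_ub. now right. Qed.

Lemma join_le x y z : le x z -> le y z -> le (join x y) z.
Proof. intros Hx Hy. apply sup_least. now intros t [-> | ->]. Qed.

Lemma join_eq_r x y : le x y -> join x y = y.
Proof.
  intro H. apply le_antisym; [apply join_le; [exact H | apply le_refl] |].
  apply le_join_r.
Qed.

Lemma mul_le_mono_l a x y : le x y -> le (mul a x) (mul a y).
Proof.
  intro H. rewrite <- (join_eq_r _ _ H). unfold join. rewrite mul_sup_distr.
  apply sup_ub. exists x. auto.
Qed.

Lemma mul_join_le a x y z :
  le (mul a x) z -> le (mul a y) z -> le (mul a (join x y)) z.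
Proof.
  intros Hx Hy. unfold join. rewrite mul_sup_distr.
  apply sup_least. now intros t [u [[-> | ->] ->]].
Qed.

Lemma mul_top_r a : mul a top = a.
Proof. now rewrite mul_comm, mul_top_l. Qed.

Lemma mul_bot_r a : mul a bot = bot.
Proof.
  assert (Ebot : (bot : L) = sup (fun _ => False)).
  { apply le_antisym; [apply bot_least | apply sup_least; tauto]. }
  apply le_antisym; [| apply bot_least].
  rewrite Ebot at 1. rewrite mul_sup_distr.
  apply sup_least. now intros t [u [[] _]].
Qed.

Lemma mul_le_l a x : le (mul a x) a.
Proof. rewrite <- (mul_top_r a) at 2. apply mul_le_mono_l, top_greatest. Qed.

Lemma mul_le_r a x : le (mul x a) a.
Proof. rewrite mul_comm. apply mul_le_l. Qed.

Lemma le_colon a b x : le (mul x b) a -> le x (colon L a b).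
Proof. intro H. unfold colon. now apply sup_ub. Qed.

Lemma colon_mul_le a b : le (mul (colon L a b) b) a.
Proof.
  rewrite mul_comm. unfold colon. rewrite mul_sup_distr.
  apply sup_least. intros t [u [Hu ->]]. now rewrite mul_comm.
Qed.

Lemma colon_eq_top a b : le b a -> colon L a b = top.
Proof.
  intro H. apply le_antisym; [apply top_greatest |].
  apply le_colon. now rewrite mul_top_l.
Qed.

Lemma colon_top a : colon L a top = a.
Proof.
  apply le_antisym.
  - rewrite <- (mul_top_r (colon L a top)). apply colon_mul_le.
  - apply le_colon. rewrite mul_top_r. apply le_refl.
Qed.

Lemma colon_prime a b : prime_elt L a -> ~ le b a -> colon L a b = a.
Proof.
  intros [_ Hprime] Hba. apply le_antisym.
  - destruct (Hprime _ _ (colon_mul_le a b)) as [H | H]; [exact H | contradiction].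
  - apply le_colon, mul_le_l.
Qed.

Lemma colon_join a b : colon L a (join a b) = colon L a b.
Proof.
  apply le_antisym; apply le_colon.
  - eapply le_trans; [| apply (colon_mul_le a (join a b))].
    apply mul_le_mono_l, le_join_r.
  - apply mul_join_le; [apply mul_le_r | apply colon_mul_le].
Qed.

Lemma divides_top_l a : divides L top a.
Proof. exists a. now rewrite mul_top_l. Qed.

Lemma divides_refl a : divides L a a.
Proof. exists top. now rewrite mul_top_r. Qed.

Lemma divides_eq_mul_colon c a : divides L c a -> a = mul c (colon L a c).
Proof.
  intros [d ->]. apply le_antisym.
  - apply mul_le_mono_l, le_colon. rewrite mul_comm. apply le_refl.
  - rewrite mul_comm. apply colon_mul_le.
Qed.

Lemma sharp_divides_colon : sharp L -> forall a b, divides L (colon L a b) a.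
Proof.
  intros Hsharp a b.
  destruct (Hsharp _ _ _ (colon_mul_le a b)) as [b1 [b2 [H1 [H2 Ea]]]].
  assert (Eb1 : b1 = colon L a b).
  { apply le_antisym; [| exact H1].
    apply le_colon. rewrite Ea. now apply mul_le_mono_l. }
  exists b2. now rewrite <- Eb1.
Qed.

Lemma divides_colon_sharp :
  (forall a b, divides L (colon L a b) a) -> sharp L.
Proof.
  intros Hdiv a1 a2 b Hle.
  exists (colon L b a2), (colon L b (colon L b a2)). repeat split.
  - now apply le_colon.
  - apply le_colon. rewrite mul_comm. apply colon_mul_le.
  - apply divides_eq_mul_colon, Hdiv.
Qed.

Lemma divides_colon_of_nondegenerate :
  (forall a b, lt L bot a -> lt L a b -> lt L b top -> ~ prime_elt L a ->
     divides L (colon L a b) a) ->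
  forall a b, divides L (colon L a b) a.
Proof.
  intros Hdiv a b. rewrite <- colon_join.
  pose proof (le_join_l a b) as Hab. set (j := join a b) in *. clearbody j.
  destruct (classic (le j a)) as [Hja | Hja].
  { rewrite colon_eq_top by exact Hja. apply divides_top_l. }
  destruct (classic (j = top)) as [-> | Hjtop].
  { rewrite colon_top. apply divides_refl. }
  destruct (classic (a = bot)) as [-> | Habot].
  { exists bot. now rewrite mul_bot_r. }
  destruct (classic (prime_elt L a)) as [Hprime | Hprime].
  { rewrite colon_prime by assumption. apply divides_refl. }
  apply Hdiv; repeat split; auto using bot_least, top_greatest.
  intros ->. apply Hja, le_refl.
Qed.

End MultLattice.

Theorem proposition2p1 (L : mult_lattice) (HL : C_lattice L) :
  let cond_i := sharp L in
  let cond_ii := forall a b : L, a = mul (colon L a (colon L a b)) (colon L a b) in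
  let cond_iii := forall a b : L, divides L (colon L a b) a in
  let cond_iv := forall a b : L,
      lt L bot a -> lt L a b -> lt L b top -> ~ prime_elt L a ->
      divides L (colon L a b) a in
  (cond_i <-> cond_ii) /\ (cond_i <-> cond_iii) /\ (cond_i <-> cond_iv).
Proof.
  intros cond_i cond_ii cond_iii cond_iv.
  assert (i_iii : cond_i <-> cond_iii).
  { split; [exact (sharp_divides_colon L) | exact (divides_colon_sharp L)]. }
  assert (ii_iii : cond_ii <-> cond_iii).
  { split; intros H a b.
    - exists (colon L a (colon L a b)). rewrite mul_comm. apply H.
    - rewrite mul_comm. apply divides_eq_mul_colon, H. }
  assert (iii_iv : cond_iii <-> cond_iv).
  { split; [intros H a b _ _ _ _; apply H | exact (divides_colon_of_nondegenerate L)]. }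
  tauto.
Qed.
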